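(* Let $(V,M)$ be a valuation domain with quotient field $L$, $M\neq0$, of the form $V=K+M$ with $K$ a subfield of $V$. Let $D$ be a subring of $K$ with quotient field $F$, let $\widetilde{D}$ be the integral closure of $D$ in $K$, let $R=D+M$ and let $\overline{R}$ be the integral closure of $R$ in $L$. Then: (6) $R$ is a DVR $\iff$ $D=K$ and $V$ is a DVR $\iff$ $R=V$ is a DVR; and likewise $R$ is a rational valuation domain $\iff$ $D=K$ and $V$ is a rational valuation domain $\iff$ $R=V$ is a rational valuation domain. (7) $R\subseteq\overline{R}$ is a root extension (resp. bounded root extension) $\iff$ $D\subseteq\widetilde{D}$ is a root extension (resp. bounded root extension). (8) $R$ is an AV-domain $\iff$ $\widetilde{D}$ is a valuation domain with quotient field $K$ and $D\subseteq\widetilde{D}$ is a root extension $\iff$ $D$ is an AV-domain and $F\subseteq K$ is a root extension (i.e. $K/F$ is purely inseparable or $K$ is algebraic over a finite field). (9) The following are equivalent: $R$ is an AV-domain with $\overline{R}$ a DVR; $R$ is an AV-domain whose maximal ideal $Q$ satisfies $\bigcap_{n\ge1}Q^n=0$; $R$ is an AV-domain and for each ideal $A$ with $0\subsetneq A\subsetneq R$ there is $n$ with $Q^n\subseteq A$, $Q$ the maximal ideal of $R$; $V$ is a DVR, $D=F$ is a field and $F\subseteq K$ is a root extension.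
   Context: A root extension $R\subseteq S$: each $s\in S$ has some power $s^n\in R$; bounded if one $n$ works for all $s$. AV-domain: domain where for nonzero $a,b$ some $n$ gives $a^n\mid b^n$ or $b^n\mid a^n$. DVR: local PID not a field. Rational valuation domain: valuation domain whose value group is order-isomorphic to a subgroup of $(\mathbb{Q},+)$. *)

From HB Require Import structures.
From mathcomp Require Import all_boot all_order all_algebra.
Set Implicit Arguments. Unset Strict Implicit. Unset Printing Implicit Defensive.
Import Order.TTheory GRing.Theory Num.Theory.
Local Open Scope ring_scope.

(* All rings are subrings of a fixed field L, represented as subsets L -> Prop. *)
Section Defs.
Variable L : fieldType.
Implicit Types A B I J Q : L -> Prop.

Definition incl A B := forall x, A x -> B x.
Definition eqset A B := forall x, A x <-> B x.

Definition subring A :=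
  [/\ A 0, A 1, (forall x y, A x -> A y -> A (x - y)) &
      (forall x y, A x -> A y -> A (x * y))].

Definition is_field A := subring A /\ forall x, A x -> x != 0 -> A x^-1.

Definition fracset A : L -> Prop :=
  fun x => exists a b, [/\ A a, A b, b != 0 & x = a / b].

Definition sumset A B : L -> Prop := fun x => exists a b, [/\ A a, B b & x = a + b].

Definition intclos A B : L -> Prop :=
  fun x => B x /\ exists p : {poly L},
      [/\ p \is monic, (forall i, A p`_i) & root p x].

Definition ideal A I :=
  [/\ incl I A, I 0, (forall x y, I x -> I y -> I (x + y)) &
      (forall r x, A r -> I x -> I (r * x))].

Definition maximal_ideal A I :=
  [/\ ideal A I, ~ I 1 &
      forall J, ideal A J -> incl I J -> eqset J I \/ J 1].

Definition principal A I := exists a, A a /\ forall x, I x <-> exists r, A r /\ x = a * r.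

Definition local_ring A := exists Q, maximal_ideal A Q /\
  forall N, maximal_ideal A N -> eqset N Q.

Definition PID A := subring A /\ forall I, ideal A I -> principal A I.

Definition DVR A := [/\ subring A, local_ring A, PID A & ~ is_field A].

Definition valuation_domain A :=
  subring A /\ forall x, fracset A x -> x != 0 -> A x \/ A x^-1.

(* value group order-isomorphic (as ordered group) to a subgroup of (Q,+):
   an ordered-group embedding of Frac(A)^*/A^* into rat, i.e. a map
   v : Frac(A)^* -> rat with v(xy) = v x + v y and x \in A <-> v x >= 0. *)
Definition rational_valuation_domain A :=
  valuation_domain A /\ exists v : L -> rat,
    (forall x y, fracset A x -> fracset A y -> x != 0 -> y != 0 ->
        v (x * y) = v x + v y) /\
    (forall x, fracset A x -> x != 0 -> (A x <-> 0 <= v x)).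

Definition root_ext A B := forall s, B s -> exists n, (0 < n)%N /\ A (s ^+ n).
Definition bounded_root_ext A B := exists n, (0 < n)%N /\ forall s, B s -> A (s ^+ n).

Definition dvdr A x y := exists c, A c /\ y = x * c.

Definition AV_domain A := subring A /\
  forall a b, A a -> A b -> a != 0 -> b != 0 ->
    exists n, (0 < n)%N /\ (dvdr A (a ^+ n) (b ^+ n) \/ dvdr A (b ^+ n) (a ^+ n)).

Definition idmul I J : L -> Prop := fun x => exists s : seq (L * L),
  (forall p, p \in s -> I p.1 /\ J p.2) /\ x = \sum_(p <- s) p.1 * p.2.

Fixpoint idpow A Q (n : nat) : L -> Prop :=
  match n with O => A | S m => idmul (idpow A Q m) Q end.

End Defs.

(* Every x in V = K + M has a residue in K, and the residue map V -> K is a ring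
   morphism with kernel M.  So R = D + M is the preimage of D, and questions about R
   become questions about D inside K:
   - the integral closure of R is D~ + M, because V is integrally closed and the
     residues of an integral equation over R form one over D;
   - R is an AV-domain iff every nonzero x in K has a power x^n or x^-n in D, which
     says both that D~ is a valuation ring of K rooted over D and that D is an
     AV-domain with F <= K a root extension;
   - if D is a field, M is the only maximal ideal of R and a uniformizer t of V
     gives M^n = t^n V; conversely, if D is not a field then (nonunits of D) + M is
     a maximal ideal of R all of whose powers contain M, and once D is a field an
     element of M \ M^2 is a uniformizer of V. *)

From HB Require Import structures.
From mathcomp Require Import all_boot all_order all_algebra.
From mathcomp Require Import ring lra boolp.
Set Implicit Arguments. Unset Strict Implicit. Unset Printing Implicit Defensive.
Import GRing.Theory Num.Theory Order.TTheory.
Local Open Scope ring_scope.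

Section Subrings.
Variable L : fieldType.
Implicit Types (A I : L -> Prop) (x y : L).

Lemma subring0 A : subring A -> A 0. Proof. by case. Qed.
Lemma subring1 A : subring A -> A 1. Proof. by case. Qed.

Lemma subringB A x y : subring A -> A x -> A y -> A (x - y).
Proof. by case=> _ _ hB _; apply: hB. Qed.

Lemma subringM A x y : subring A -> A x -> A y -> A (x * y).
Proof. by case=> _ _ _; apply. Qed.

Lemma subringN A x : subring A -> A x -> A (- x).
Proof. by move=> hA hx; rewrite -sub0r; exact: subringB hA (subring0 hA) hx. Qed.

Lemma subringD A x y : subring A -> A x -> A y -> A (x + y).
Proof. by move=> hA hx hy; rewrite -[y]opprK; exact: subringB hA hx (subringN hA hy). Qed.

Lemma subringX A x n : subring A -> A x -> A (x ^+ n).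
Proof.
move=> hA hx; elim: n => [|n IH]; first by rewrite expr0; apply: subring1.
by rewrite exprS; apply: subringM.
Qed.

Lemma subring_sum A (I : Type) (r : seq I) (F : I -> L) :
  subring A -> (forall i, A (F i)) -> A (\sum_(i <- r) F i).
Proof.
move=> hA hF; apply: big_ind => //; first exact: subring0 hA.
by move=> x y; apply: subringD hA.
Qed.

Lemma ideal_sub A I : ideal A I -> incl I A. Proof. by case. Qed.
Lemma ideal0 A I : ideal A I -> I 0. Proof. by case. Qed.

Lemma idealD A I x y : ideal A I -> I x -> I y -> I (x + y).
Proof. by case=> _ _ hD _; apply: hD. Qed.

Lemma idealMl A I r x : ideal A I -> A r -> I x -> I (r * x).
Proof. by case=> _ _ _; apply. Qed.

Lemma idealMr A I r x : ideal A I -> A r -> I x -> I (x * r).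
Proof. by rewrite mulrC; apply: idealMl. Qed.

Lemma idealN A I x : subring A -> ideal A I -> I x -> I (- x).
Proof.
by move=> hA hI hx; rewrite -mulN1r; apply: idealMl hI (subringN hA (subring1 hA)) hx.
Qed.

Lemma idealB A I x y : subring A -> ideal A I -> I x -> I y -> I (x - y).
Proof. by move=> hA hI hx hy; exact: idealD hI hx (idealN hA hI hy). Qed.

End Subrings.

Definition integral (L : fieldType) (A : L -> Prop) (x : L) :=
  exists p : {poly L}, [/\ p \is monic, forall i, A p`_i & root p x].

Definition unit_in (L : fieldType) (A : L -> Prop) (x : L) := x != 0 /\ A x^-1.

Section IntegralOverSubring.
Variables (L : fieldType) (A : L -> Prop).
Hypothesis hA : subring A.

Definition subring_pred : {pred L} := fun x => `[< A x >].

Lemma subring_pred_closed : subring_closed subring_pred.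
Proof.
split=> [|x y /asboolP hx /asboolP hy|x y /asboolP hx /asboolP hy]; apply/asboolP.
- exact: subring1 hA.
- exact: subringB hA hx hy.
- exact: subringM hA hx hy.
Qed.

HB.instance Definition _ :=
  GRing.isSubringClosed.Build L subring_pred subring_pred_closed.
Definition subring_type := {x : L | x \in subring_pred}.
HB.instance Definition _ := [isSub of subring_type for val].
HB.instance Definition _ := [Choice of subring_type by <:].
HB.instance Definition _ := [SubChoice_isSubComNzRing of subring_type by <:].
Definition subring_val : {rmorphism subring_type -> L} :=
  GRing.RMorphism.clone _ _ val _.

Lemma integralE x : integral A x <-> integralOver subring_val x.
Proof.
split=> [[p [mp Ap px]]|[p mp px]].
- pose q := \poly_(i < size p) insubd (0 : subring_type) p`_i.
  have qp : map_poly subring_val q = p.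
    apply/polyP => i; rewrite coef_map /= coef_poly.
    by case: ltnP => hi; [rewrite insubdK //; apply/asboolP | rewrite nth_default].
  exists q; last by rewrite qp.
  rewrite monicE -(inj_eq val_inj) -(lead_coef_map_inj val_inj (rmorph0 subring_val)).
  by rewrite qp rmorph1.
- exists (map_poly subring_val p); split => // [|i]; first exact: monic_map.
  by rewrite coef_map; apply/asboolP; case: (p`_i).
Qed.

Lemma integral_mem x : A x -> integral A x.
Proof.
move=> hx; apply/integralE.
have Ax : x \in subring_pred by apply/asboolP.
exact: (integral_id subring_val (Sub x Ax : subring_type)).
Qed.

Lemma integralD x y : integral A x -> integral A y -> integral A (x + y).
Proof. by move=> /integralE hx /integralE hy; apply/integralE/integral_add. Qed.

Lemma integralB x y : integral A x -> integral A y -> integral A (x - y).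
Proof. by move=> /integralE hx /integralE hy; apply/integralE/integral_sub. Qed.

Lemma integralM x y : integral A x -> integral A y -> integral A (x * y).
Proof. by move=> /integralE hx /integralE hy; apply/integralE/integral_mul. Qed.

End IntegralOverSubring.

Section IntegralClosure.
Variable L : fieldType.
Implicit Types (A B : L -> Prop) (x u : L).

Lemma integral_mono A B x : incl A B -> integral A x -> integral B x.
Proof. by move=> hAB [p [mp Ap px]]; exists p; split => // i; apply: hAB. Qed.

Lemma integral_root A x n : subring A -> (0 < n)%N -> A (x ^+ n) -> integral A x.
Proof.
move=> hA n0 hx; exists ('X^n - (x ^+ n)%:P); split; first exact: monicXnsubC.
- move=> i; rewrite coefB coefXn coefC.
  case: (i == n); case: (i == 0)%N; rewrite /= ?subr0 ?sub0r ?subrr.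
  + exact: subringB hA (subring1 hA) hx.
  + exact: subring1 hA.
  + exact: subringN hA hx.
  + exact: subring0 hA.
- by rewrite /root !hornerE subrr.
Qed.

Lemma monic_root_pow (p : {poly L}) x : p \is monic -> root p x ->
  (0 < (size p).-1)%N /\ x ^+ (size p).-1 = - \sum_(i < (size p).-1) p`_i * x ^+ i.
Proof.
move=> mp px; have lp : lead_coef p = 1 by apply/eqP.
have sp : (1 < size p)%N.
  rewrite ltnNge; apply/negP => sp1; move: px lp.
  rewrite (size1_polyC sp1) /root hornerC lead_coefC => /eqP -> /eqP.
  by rewrite eq_sym oner_eq0.
split; first by rewrite -subn1 subn_gt0.
move: px; rewrite /root horner_coef -(prednK (ltnW sp)) big_ord_recr /=.
by rewrite -lead_coefE lp mul1r addrC addr_eq0 => /eqP.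
Qed.

Lemma expV_mul_exp u i n : u != 0 -> (i <= n)%N -> u^-1 ^+ i * u ^+ n = u ^+ (n - i).
Proof.
move=> u0 hi; have -> : u ^+ n = u ^+ (n - i) * u ^+ i by rewrite -exprD subnK.
by rewrite mulrCA exprVn mulVf ?mulr1 // expf_neq0.
Qed.

(* A monic equation of degree n for u^-1, multiplied by u^(n-1), expresses u^-1
   as a polynomial in u with coefficients in A. *)
Lemma integral_inv_mem A u : subring A -> A u -> u != 0 -> integral A u^-1 -> A u^-1.
Proof.
move=> hA hu u0 [p [mp Ap pu]]; have [n0 e] := monic_root_pow mp pu.
set n := (size p).-1 in n0 e.
have -> : u^-1 = - \sum_(i < n) p`_i * u ^+ (n.-1 - i).
  have -> : u^-1 = u^-1 ^+ n * u ^+ n.-1.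
    by rewrite -{1}(prednK n0) exprSr mulrAC expV_mul_exp // subnn mul1r.
  rewrite e mulNr big_distrl /=; congr (- _); apply: eq_bigr => i _.
  by rewrite -mulrA expV_mul_exp // -ltnS prednK.
apply: (subringN hA); apply: (subring_sum _ hA) => i.
exact: subringM hA (Ap i) (subringX _ hA hu).
Qed.

Lemma intclos_subring A B : subring A -> subring B -> subring (intclos A B).
Proof.
move=> hA hB; split.
- by split; [exact: subring0 hB | exact: (integral_mem hA (subring0 hA))].
- by split; [exact: subring1 hB | exact: (integral_mem hA (subring1 hA))].
- by move=> x y [Bx Ix] [By Iy]; split; [exact: subringB hB Bx By | exact: integralB].
- by move=> x y [Bx Ix] [By Iy]; split; [exact: subringM hB Bx By | exact: integralM].
Qed.

End IntegralClosure.

Section LocalRings.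
Variable L : fieldType.
Implicit Types (A I J Q : L -> Prop) (x : L).

Definition contains_nonunits A Q := forall x, A x -> ~ Q x -> unit_in A x.

Lemma maximal_not_unit A Q x : maximal_ideal A Q -> Q x -> ~ unit_in A x.
Proof.
case=> hQ nQ1 _ Qx [x0 Axi]; apply: nQ1.
by rewrite -(mulVf x0); apply: idealMl hQ Axi Qx.
Qed.

Lemma maximal_of_nonunits A Q :
  ideal A Q -> ~ Q 1 -> contains_nonunits A Q -> maximal_ideal A Q.
Proof.
move=> hQ nQ1 hu; split => // J hJ QJ.
have [JQ|nJQ] := pselect (incl J Q).
  by left => x; split; [apply: JQ | apply: QJ].
have [x /not_implyP [Jx nQx]] : exists x, ~ (J x -> Q x) by apply/existsNP.
right; have [x0 Axi] := hu x (ideal_sub hJ Jx) nQx.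
by rewrite -(mulVf x0); apply: idealMl hJ Axi Jx.
Qed.

Lemma maximal_nonunits_unique A Q0 Q :
  maximal_ideal A Q0 -> contains_nonunits A Q0 -> maximal_ideal A Q -> eqset Q Q0.
Proof.
move=> [hQ0 nQ01 _] hu [hQ nQ1 hmax].
have QQ0 : incl Q Q0.
  move=> x Qx; apply: contra_notP nQ1 => nQ0x.
  have [x0 Axi] := hu x (ideal_sub hQ Qx) nQ0x.
  by rewrite -(mulVf x0); apply: idealMl hQ Axi Qx.
by case: (hmax Q0 hQ0 QQ0) => [e x|/nQ01//]; split => [/QQ0|/e].
Qed.

Lemma local_of_nonunits A Q :
  maximal_ideal A Q -> contains_nonunits A Q -> local_ring A.
Proof. by move=> hQ hu; exists Q; split => // N; apply: maximal_nonunits_unique. Qed.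

Lemma nonunits_ideal A : subring A ->
  (forall x y, A x -> A y -> ~ unit_in A x -> ~ unit_in A y -> ~ unit_in A (x + y)) ->
  ideal A (fun x => A x /\ ~ unit_in A x).
Proof.
move=> hA hD; split.
- by move=> x [].
- by split; [exact: subring0 hA | case; rewrite eqxx].
- by move=> x y [Ax nx] [Ay ny]; split; [exact: subringD hA Ax Ay | exact: hD].
- move=> r x Ar [Ax nx]; split; first exact: subringM hA Ar Ax.
  case; rewrite mulf_eq0 negb_or => /andP[r0 x0] Arxi; apply: nx; split => //.
  by rewrite -[x^-1]mul1r -(divff r0) -mulrA -invfM; apply: subringM hA Ar Arxi.
Qed.

Lemma dvdr_ideal A c : subring A -> A c -> ideal A (dvdr A c).
Proof.
move=> hA hc; split.
- by move=> _ [r [hr ->]]; apply: subringM hA hc hr.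
- by exists 0; rewrite mulr0; split => //; apply: subring0 hA.
- move=> _ _ [r [hr ->]] [s [hs ->]]; exists (r + s).
  by rewrite mulrDr; split => //; apply: subringD hA hr hs.
- move=> a _ ha [r [hr ->]]; exists (a * r).
  by rewrite mulrCA; split => //; apply: subringM hA ha hr.
Qed.

Lemma ideal_bigcap A (I : nat -> L -> Prop) :
  (forall n, ideal A (I n)) -> ideal A (fun x => forall n, I n x).
Proof.
move=> hI; split.
- by move=> x /(_ 0%N); apply: (ideal_sub (hI 0%N)).
- by move=> n; apply: (ideal0 (hI n)).
- by move=> x y hx hy n; apply: (idealD (hI n) (hx n) (hy n)).
- by move=> r x hr hx n; apply: (idealMl (hI n) hr (hx n)).
Qed.


Lemma idmul_mul I J a b : I a -> J b -> idmul I J (a * b).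
Proof.
move=> ha hb; exists [:: (a, b)]; split; last by rewrite big_seq1.
by move=> p; rewrite inE => /eqP ->.
Qed.

Lemma idmul_mono I I' J : incl I I' -> incl (idmul I J) (idmul I' J).
Proof.
by move=> II' x [s [hs ->]]; exists s; split => // p /hs [Ip Jp]; split => //; apply: II'.
Qed.

Lemma idmul_ind I J (P : L -> Prop) : P 0 -> (forall x y, P x -> P y -> P (x + y)) ->
  (forall a b, I a -> J b -> P (a * b)) -> incl (idmul I J) P.
Proof.
move=> P0 PD Pab x [s [hs ->]]; rewrite big_seq; apply: big_ind => // p /hs [Ip Jp].
exact: Pab.
Qed.

Lemma idmul_ideal A Q : ideal A Q -> incl (idmul A Q) Q.
Proof.
move=> hQ; apply: idmul_ind; first exact: ideal0 hQ.
  by move=> x y; apply: idealD hQ.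
by move=> a b; apply: idealMl hQ.
Qed.

Lemma idpow_mul A Q q r n : Q q -> A r -> idpow A Q n (q ^+ n * r).
Proof.
move=> hq hr; elim: n => [|n IH] /=; first by rewrite expr0 mul1r.
by rewrite exprSr mulrAC; apply: idmul_mul IH hq.
Qed.

(* For x <> 0 in every Q^n, the ideal x^2 A is nonzero and misses x, so contains no Q^n. *)
Lemma idpow_cap0 A Q : subring A -> maximal_ideal A Q ->
  (forall I, ideal A I -> (exists a, I a /\ a != 0) -> (exists r, A r /\ ~ I r) ->
     exists n, incl (idpow A Q n) I) ->
  forall x, (forall n, (0 < n)%N -> idpow A Q n x) -> x = 0.
Proof.
move=> hA hQ cofinal x hx; apply/eqP/negP => /negP x0.
have [hQi nQ1 _] := hQ.
have Qx : Q x by apply: (idmul_ideal hQi); apply: (hx 1%N).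
have Ax := ideal_sub hQi Qx.
have x2I : ~ dvdr A (x ^+ 2) x.
  move=> [r [hr e]]; apply: nQ1.
  have -> : 1 = r * x by apply: (mulfI x0); rewrite mulr1 mulrCA -expr2 mulrC -e.
  exact: idealMl hQi hr Qx.
have I0 : exists a, dvdr A (x ^+ 2) a /\ a != 0.
  exists (x ^+ 2); split; last exact: expf_neq0.
  by exists 1; rewrite mulr1; split => //; apply: subring1 hA.
have [|n sub] := cofinal _ (dvdr_ideal hA (subringX 2 hA Ax)) I0; first by exists x.
by apply: x2I; case: n sub => [|n] sub; apply: sub => //; apply: hx.
Qed.

End LocalRings.

Section ValuationDomain.
Variables (L : fieldType) (V M : L -> Prop).
Hypotheses (hV : valuation_domain V) (hVL : forall x, fracset V x)
  (hM : maximal_ideal V M).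

Let hVs : subring V. Proof. by case: hV. Qed.
Let hMi : ideal V M. Proof. by case: hM. Qed.

Lemma valuation_dichotomy x : x != 0 -> V x \/ V x^-1.
Proof. by case: hV => _; apply; apply: hVL. Qed.

Lemma valuation_integral x : integral V x -> V x.
Proof.
move=> ix; have [->|x0] := eqVneq x 0; first exact: subring0 hVs.
have [//|Vxi] := valuation_dichotomy x0.
by rewrite -[x]invrK; apply: (integral_inv_mem hVs Vxi); rewrite ?invr_eq0 ?invrK.
Qed.

Lemma valuation_nonunitD x y : V x -> V y ->
  ~ unit_in V x -> ~ unit_in V y -> ~ unit_in V (x + y).
Proof.
move=> Vx Vy nx ny [s0 Vs].
wlog Vxy : x y Vx Vy nx ny s0 Vs / V (x / y).
  move=> hw; have [x0|x0] := eqVneq x 0; first by apply: ny; rewrite x0 add0r in s0 Vs.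
  have [y0|y0] := eqVneq y 0; first by apply: nx; rewrite y0 addr0 in s0 Vs.
  have [Vxy|Vyx] := valuation_dichotomy (mulf_neq0 x0 (invr_neq0 y0)); first exact: (hw x y).
  by rewrite invf_div in Vyx; apply: (hw y x) => //; rewrite addrC.
have y0 : y != 0 by apply/eqP => e; apply: nx; rewrite e addr0 in s0 Vs.
apply: ny; split => //; have -> : y^-1 = (1 + x / y) * (x + y)^-1 by field; rewrite s0 y0.
by apply: subringM hVs _ Vs; apply: subringD hVs (subring1 hVs) Vxy.
Qed.

Lemma valuation_nonunits : contains_nonunits V M.
Proof.
move=> x Vx nMx; apply: contra_notP nMx => nux.
pose N y := V y /\ ~ unit_in V y.
have hN : ideal V N by apply: nonunits_ideal hVs _ => y z; apply: valuation_nonunitD.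
have MN : incl M N.
  by move=> y My; split; [exact: (ideal_sub hMi My) | exact: maximal_not_unit hM My].
case: hM => _ _ /(_ N hN MN) [e|[_ []]]; first exact/e.
by split; [exact: oner_neq0 | rewrite invr1; exact: subring1 hVs].
Qed.

Definition uniformizer (t : L) := [/\ t != 0, forall x, M x <-> dvdr V t x &
  forall x, (forall n, dvdr V (t ^+ n) x) -> x = 0].

Lemma uniformizer_mem t : uniformizer t -> M t.
Proof.
by case=> _ htM _; apply/htM; exists 1; rewrite mulr1; split => //; apply: subring1 hVs.
Qed.

Lemma dvr_uniformizer : DVR V -> exists t, uniformizer t.
Proof.
case=> _ _ [_ hP] nfield; have [t [Vt htM]] := hP M hMi.
have Mt : M t by apply/htM; exists 1; rewrite mulr1; split => //; apply: subring1 hVs.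
have t0 : t != 0.
  apply/eqP => t0; apply: nfield; split => // x Vx x0.
  have nMx : ~ M x by case/htM => r [_ e]; move: x0; rewrite e t0 mul0r eqxx.
  by have [] := valuation_nonunits Vx nMx.
exists t; split => // x Ix; apply/eqP/negP => /negP x0.
pose I y := forall n, dvdr V (t ^+ n) y.
have [a [Va haI]] := hP I (ideal_bigcap (fun n => dvdr_ideal hVs (subringX n hVs Vt))).
have Ia : I a by apply/haI; exists 1; rewrite mulr1; split => //; apply: subring1 hVs.
have a0 : a != 0 by case/haI: Ix => r [_ e]; apply: contraNneq x0 => a0; rewrite e a0 mul0r.
have [c [Vc ec]] := Ia 1%N; rewrite expr1 in ec.
have Ic : I c.
  move=> n; have [w [Vw ew]] := Ia n.+1; exists w; split => //.
  by apply: (mulfI t0); rewrite -ec ew exprS mulrA.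
have [r [Vr er]] := (haI c).1 Ic.
have tr1 : t * r = 1 by apply: (mulfI a0); rewrite mulr1 mulrCA -er -ec.
apply: (maximal_not_unit hM Mt); split => //.
by have -> : t^-1 = r by rewrite -[RHS](mulKf t0) tr1 mulr1.
Qed.

Lemma uniformizer_factor t x : uniformizer t -> V x -> x != 0 ->
  exists k u, [/\ V u, unit_in V u & x = t ^+ k * u].
Proof.
move=> [t0 htM hcap] Vx x0.
have : ~ forall n, dvdr V (t ^+ n) x by move/hcap/eqP; apply/negP.
move=> /existsNP exn; have {}exn : exists n, `[< ~ dvdr V (t ^+ n) x >].
  by have [n hn] := exn; exists n; apply/asboolP.
have [[|k] /asboolP nk kmin] := ex_minnP exn.
  by case: nk; exists x; rewrite expr0 mul1r.
have [[u [Vu eu]]|/asboolP/kmin] := pselect (dvdr V (t ^+ k) x); last by rewrite ltnn.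
exists k, u; split => //; apply: (valuation_nonunits Vu) => /htM [w [Vw ew]].
by case: nk; exists w; split => //; rewrite eu ew exprSr mulrA.
Qed.

Lemma uniformizer_PID t : uniformizer t -> PID V.
Proof.
move=> tu; have Vt := ideal_sub hMi (uniformizer_mem tu).
split => // I hI.
have [Izero|] := pselect (forall x, I x -> x = 0).
  exists 0; split; first exact: subring0 hVs.
  move=> x; split => [/Izero ->|[r [_ ->]]]; last by rewrite mul0r; apply: ideal0 hI.
  by exists 0; rewrite mulr0; split => //; apply: subring0 hVs.
move=> /existsNP [x /not_implyP [Ix /eqP x0]].
have powI y : I y -> y != 0 -> exists k u, [/\ V u, I (t ^+ k) & y = t ^+ k * u].
  move=> Iy y0; have [k [u [Vu [u0 Vui] ey]]] := uniformizer_factor tu (ideal_sub hI Iy) y0.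
  exists k, u; split => //.
  have -> : t ^+ k = u^-1 * y by rewrite ey mulrCA mulVf ?mulr1.
  exact: idealMl hI Vui Iy.
have exn : exists n, `[< I (t ^+ n) >].
  by have [k [u [_ Ik _]]] := powI x Ix x0; exists k; apply/asboolP.
have [n /asboolP In nmin] := ex_minnP exn.
exists (t ^+ n); split; first exact: subringX n hVs Vt.
move=> y; split => [Iy|[r [Vr ->]]]; last exact: idealMr hI Vr In.
have [->|y0] := eqVneq y 0.
  by exists 0; rewrite mulr0; split => //; apply: subring0 hVs.
have [k [u [Vu Ik ->]]] := powI y Iy y0.
have nk : (n <= k)%N by apply: nmin; apply/asboolP.
exists (t ^+ (k - n) * u); split; first exact: subringM hVs (subringX _ hVs Vt) Vu.
by rewrite mulrA -exprD subnKC.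
Qed.

Lemma uniformizer_dvr t : uniformizer t -> DVR V.
Proof.
move=> tu; have [t0 _ _] := tu; have Mt := uniformizer_mem tu.
split => //; first exact: local_of_nonunits hM valuation_nonunits.
  exact: uniformizer_PID tu.
by case=> _ /(_ t (ideal_sub hMi Mt) t0) Vti; apply: (maximal_not_unit hM Mt).
Qed.

Lemma idpow_dvdr A Q t n : incl A V -> incl Q M -> uniformizer t ->
  incl (idpow A Q n) (dvdr V (t ^+ n)).
Proof.
move=> AV QM [_ htM _]; elim: n => [|n IH] /=.
  by move=> x Ax; exists x; rewrite expr0 mul1r; split => //; apply: AV.
apply: idmul_ind.
- by exists 0; rewrite mulr0; split => //; apply: subring0 hVs.
- move=> _ _ [v [Vv ->]] [w [Vw ->]]; exists (v + w).
  by rewrite mulrDr; split => //; apply: subringD hVs Vv Vw.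
- move=> a b /IH [v [Vv ->]] /QM /htM [w [Vw ->]]; exists (v * w).
  by rewrite exprSr mulrACA; split => //; apply: subringM hVs Vv Vw.
Qed.

Lemma exp_idpow A t n v : subring A -> M t -> V v -> idpow A M n.+1 (t ^+ n.+1 * v).
Proof.
move=> hA Mt Vv; elim: n => [|n IH].
  by rewrite expr1 /= -[t * v]mul1r; apply: idmul_mul (subring1 hA) (idealMr hMi Vv Mt).
by rewrite exprSr mulrAC; apply: idmul_mul IH Mt.
Qed.

End ValuationDomain.

Definition root_valuation (L : fieldType) (A B : L -> Prop) :=
  forall x, B x -> x != 0 -> exists n, (0 < n)%N /\ (A (x ^+ n) \/ A (x^-1 ^+ n)).

Section RootValuation.
Variable L : fieldType.
Implicit Types (A K : L -> Prop) (x y : L).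

Lemma frac_mem A x : subring A -> A x -> fracset A x.
Proof.
by move=> hA Ax; exists x, 1; split; rewrite ?invr1 ?mulr1 ?oner_neq0 //; apply: subring1 hA.
Qed.

Lemma frac_sub A K : is_field K -> incl A K -> incl (fracset A) K.
Proof.
case=> hK Kinv AK _ [a [b [Aa Ab b0 ->]]].
exact: subringM hK (AK _ Aa) (Kinv _ (AK _ Ab) b0).
Qed.

Lemma field_fracE A : subring A -> is_field A <-> eqset A (fracset A).
Proof.
move=> hA; split=> [[_ Ainv] x|e]; first split; first exact: frac_mem.
  by case=> a [b [Aa Ab b0 ->]]; apply: subringM hA Aa (Ainv _ Ab b0).
split => // x Ax x0; apply/e; exists 1, x; split; rewrite ?mul1r //; exact: subring1 hA.
Qed.

Lemma AV_domainE A : subring A -> AV_domain A <-> root_valuation A (fracset A).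
Proof.
move=> hA; split=> [[_ hAV] _ [a [b [Aa Ab b0 ->]]] ab0|hrv].
  have a0 : a != 0 by apply: contraNneq ab0 => ->; rewrite mul0r.
  have [n [n0 [[c [Ac e]]|[c [Ac e]]]]] := hAV a b Aa Ab a0 b0; exists n; split => //.
  - by right; rewrite invf_div expr_div_n e mulrAC divff ?mul1r // expf_neq0.
  - by left; rewrite expr_div_n e mulrAC divff ?mul1r // expf_neq0.
split => // a b Aa Ab a0 b0.
have Fba : fracset A (b / a) by exists b, a.
have [n [n0 [ba|ab]]] := hrv _ Fba (mulf_neq0 b0 (invr_neq0 a0)); exists n; split => //.
- by left; exists ((b / a) ^+ n); split => //; rewrite expr_div_n mulrC divfK // expf_neq0.
- right; exists ((b / a)^-1 ^+ n); split => //.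
  by rewrite invf_div expr_div_n mulrC divfK // expf_neq0.
Qed.

Lemma field_AV_domain A : is_field A -> AV_domain A.
Proof.
case=> hA Ainv; split => // a b Aa Ab a0 b0; exists 1%N; split => //; left.
by exists (a^-1 * b); split; [exact: subringM hA (Ainv _ Aa a0) Ab | rewrite !expr1 mulVKf].
Qed.

Lemma root_valuation_frac A K : subring A -> is_field K -> incl A K ->
  root_valuation A K <-> AV_domain A /\ root_ext (fracset A) K.
Proof.
move=> hA hK AK; rewrite AV_domainE //; split=> [hrv|[hrv hroot] x Kx x0].
  split=> [x Fx|x Kx]; first exact: hrv x (frac_sub hK AK Fx).
  have [->|x0] := eqVneq x 0.
    by exists 1%N; rewrite expr1; split => //; exact: (frac_mem hA (subring0 hA)).
  have [n [n0 [An|Ani]]] := hrv x Kx x0; exists n; split => //; first exact: (frac_mem hA An).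
  exists 1, (x^-1 ^+ n); split; rewrite ?expf_neq0 ?invr_eq0 //; first exact: subring1 hA.
  by rewrite exprVn invrK mul1r.
have [n [n0 Fxn]] := hroot x Kx.
have [k [k0 [Ak|Ak]]] := hrv _ Fxn (expf_neq0 n x0); exists (n * k)%N.
  by rewrite muln_gt0 n0 k0 exprM; split => //; left.
by rewrite muln_gt0 n0 k0 !exprM exprVn; split => //; right.
Qed.

(* If x/y is integral over A, then so is y^-1 = (1 + x/y) (x + y)^-1, which then lies in A. *)
Lemma root_valuation_nonunitD A K x y : subring A -> is_field K -> incl A K ->
  root_valuation A K -> A x -> A y -> ~ unit_in A x -> ~ unit_in A y -> ~ unit_in A (x + y).
Proof.
move=> hA [hK Kinv] AK hrv Ax Ay nx ny [s0 As].
wlog Ixy : x y Ax Ay nx ny s0 As / integral A (x / y).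
  move=> hw; have [x0|x0] := eqVneq x 0; first by apply: ny; rewrite x0 add0r in s0 As.
  have [y0|y0] := eqVneq y 0; first by apply: nx; rewrite y0 addr0 in s0 As.
  have Kxy : K (x / y) by apply: subringM hK (AK _ Ax) (Kinv _ (AK _ Ay) y0).
  have [n [n0 [Axy|Ayx]]] := hrv _ Kxy (mulf_neq0 x0 (invr_neq0 y0)).
    exact: (hw x y) (integral_root hA n0 Axy).
  rewrite invf_div in Ayx; rewrite addrC in s0 As.
  exact: (hw y x) (integral_root hA n0 Ayx).
have y0 : y != 0 by apply/eqP => e; apply: nx; rewrite e addr0 in s0 As.
apply: ny; split => //; apply: (integral_inv_mem hA Ay y0).
have -> : y^-1 = (1 + x / y) * (x + y)^-1 by field; rewrite s0 y0.
exact: (integralM hA (integralD hA (integral_mem hA (subring1 hA)) Ixy) (integral_mem hA As)).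
Qed.

Lemma root_valuation_intclos A K : subring A -> is_field K -> incl A K ->
  root_valuation A K <->
  [/\ valuation_domain (intclos A K), eqset (fracset (intclos A K)) K &
       root_ext A (intclos A K)].
Proof.
move=> hA hKf AK; have [hK Kinv] := hKf.
have hDt := intclos_subring hA hK.
have Dt_of x n : K x -> (0 < n)%N -> A (x ^+ n) -> intclos A K x.
  by move=> Kx n0 Axn; split => //; apply: integral_root hA n0 Axn.
have fracK := frac_sub hKf (fun x (Dx : intclos A K x) => Dx.1).
split=> [hrv|[[_ hval] efrac hroot] x Kx x0].
  split.
  - split => // x Fx x0; have Kx := fracK x Fx.
    have [n [n0 [Axn|Axin]]] := hrv x Kx x0; [left | right].
      exact: Dt_of Kx n0 Axn.
    exact: Dt_of (Kinv _ Kx x0) n0 Axin.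
  - move=> x; split=> [Fx|Kx]; first exact: fracK x Fx.
    have [->|x0] := eqVneq x 0; first exact: (frac_mem hDt (subring0 hDt)).
    have [n [n0 [Axn|Axin]]] := hrv x Kx x0.
      exact: (frac_mem hDt (Dt_of x n Kx n0 Axn)).
    exists 1, x^-1; split; rewrite ?invrK ?mul1r ?invr_eq0 //; first exact: subring1 hDt.
    exact: Dt_of (Kinv _ Kx x0) n0 Axin.
  - move=> s Ds; have [->|s0] := eqVneq s 0.
      by exists 1%N; rewrite expr1; split => //; apply: subring0 hA.
    have [n [n0 [Asn|Asin]]] := hrv s Ds.1 s0; exists n; split => //.
    rewrite -[s ^+ n]invrK -exprVn; apply: integral_inv_mem hA Asin _ _.
      by rewrite expf_neq0 ?invr_eq0.
    by rewrite exprVn invrK; exact: (subringX n hDt Ds).2.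
have [Dx|Dxi] := hval x (proj2 (efrac x) Kx) x0.
  by have [n [n0 Axn]] := hroot x Dx; exists n; split => //; left.
by have [n [n0 Axn]] := hroot _ Dxi; exists n; split => //; right.
Qed.

End RootValuation.

Lemma rat_archimedean_ge0 (a c : rat) : (forall n, 0 <= a + c *+ n) -> 0 <= c.
Proof.
move=> h; rewrite leNgt; apply/negP => c0; have nc0 : 0 < - c by rewrite oppr_gt0.
have a0 : 0 <= a by have := h 0%N; rewrite mulr0n addr0.
have := h (Num.bound (a / - c)); have := archi_boundP (divr_ge0 a0 (ltW nc0)).
rewrite ltr_pdivrMr // -mulr_natl; lra.
Qed.

Section KplusM.
Variables (L : fieldType) (V M K : L -> Prop).
Hypotheses (hV : valuation_domain V) (hVL : forall x, fracset V x)
  (hM : maximal_ideal V M) (hM0 : exists m, M m /\ m != 0)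
  (hK : is_field K) (hKV : incl K V) (hVKM : eqset V (sumset K M)).
Implicit Types (A B : L -> Prop) (x y : L).

Let hVs : subring V. Proof. by case: hV. Qed.
Let hMi : ideal V M. Proof. by case: hM. Qed.
Let hKs : subring K. Proof. by case: hK. Qed.
Let Kinv x : K x -> x != 0 -> K x^-1. Proof. by case: hK => _; apply. Qed.

Lemma KM_eq0 x : K x -> M x -> x = 0.
Proof.
move=> Kx Mx; apply: contra_notP (maximal_not_unit hM Mx) => /eqP x0.
by split => //; apply: hKV (Kinv Kx x0).
Qed.

Lemma residue_ex x : exists k, V x -> K k /\ M (x - k).
Proof.
have [/hVKM [k [m [Kk Mm ->]]]|nVx] := pselect (V x); last by exists 0.
by exists k => _; split => //; rewrite addrAC subrr add0r.
Qed.

(* The residue map V -> V/M, valued in K; its value outside V is unspecified. *)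
Definition residue x : L := projT1 (cid (residue_ex x)).

Lemma residueP x : V x -> K (residue x) /\ M (x - residue x).
Proof. by move=> Vx; rewrite /residue; case: cid => k /= /(_ Vx). Qed.

Lemma residue_eq x k : K k -> M (x - k) -> residue x = k.
Proof.
move=> Kk Mxk; have Vx : V x.
  by rewrite -(subrK k x); apply: subringD hVs (ideal_sub hMi Mxk) (hKV Kk).
have [Kr Mxr] := residueP Vx; apply/eqP; rewrite -subr_eq0; apply/eqP.
apply: KM_eq0; first exact: subringB hKs Kr Kk.
have -> : residue x - k = (x - k) - (x - residue x) by ring.
exact: idealB hVs hMi Mxk Mxr.
Qed.

Lemma residueK k : K k -> residue k = k.
Proof. by move=> Kk; apply: residue_eq Kk _; rewrite subrr; apply: ideal0 hMi. Qed.

Lemma residue_eq0 x : V x -> residue x = 0 <-> M x.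
Proof.
move=> Vx; split=> [r0|Mx]; last by apply: residue_eq (subring0 hKs) _; rewrite subr0.
by have [_] := residueP Vx; rewrite r0 subr0.
Qed.

Lemma residueD x y : V x -> V y -> residue (x + y) = residue x + residue y.
Proof.
move=> Vx Vy; have [Kx Mx] := residueP Vx; have [Ky My] := residueP Vy.
apply: residue_eq; first exact: subringD hKs Kx Ky.
by rewrite opprD addrACA; apply: idealD hMi Mx My.
Qed.

Lemma residueB x y : V x -> V y -> residue (x - y) = residue x - residue y.
Proof.
move=> Vx Vy; have [Kx Mx] := residueP Vx; have [Ky My] := residueP Vy.
apply: residue_eq; first exact: subringB hKs Kx Ky.
have -> : x - y - (residue x - residue y) = (x - residue x) - (y - residue y) by ring.
exact: idealB hVs hMi Mx My.
Qed.

Lemma residueM x y : V x -> V y -> residue (x * y) = residue x * residue y.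
Proof.
move=> Vx Vy; have [Kx Mx] := residueP Vx; have [Ky My] := residueP Vy.
apply: residue_eq; first exact: subringM hKs Kx Ky.
have -> : x * y - residue x * residue y = x * (y - residue y) + residue y * (x - residue x).
  by ring.
apply: idealD hMi (idealMl hMi Vx My) (idealMl hMi (hKV Ky) Mx).
Qed.

Lemma residueX x n : V x -> residue (x ^+ n) = residue x ^+ n.
Proof.
move=> Vx; elim: n => [|n IH]; first by rewrite !expr0 residueK //; apply: subring1 hKs.
by rewrite !exprS residueM ?IH //; apply: subringX hVs Vx.
Qed.

Lemma residue_sum (I : Type) (r : seq I) (F : I -> L) : (forall i, V (F i)) ->
  residue (\sum_(i <- r) F i) = \sum_(i <- r) residue (F i).
Proof.
move=> VF; elim: r => [|i r IH]; first by rewrite !big_nil residueK //; apply: subring0 hKs.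
by rewrite !big_cons residueD ?IH //; apply: (subring_sum _ hVs).
Qed.

Lemma residueV x : V x -> ~ M x -> residue x^-1 = (residue x)^-1.
Proof.
move=> Vx nMx; have [x0 Vxi] := valuation_nonunits hV hVL hM Vx nMx.
have r0 : residue x != 0 by apply/eqP => /(residue_eq0 Vx).
apply: (mulIf r0); rewrite -residueM // !mulVf // residueK //; exact: subring1 hKs.
Qed.

Lemma sumset_residue A x : incl A K -> sumset A M x <-> V x /\ A (residue x).
Proof.
move=> AK; split=> [[a [m [Aa Mm ->]]]|[Vx Ar]].
  split; first by apply/hVKM; exists a, m; split => //; apply: AK.
  by rewrite (residue_eq (AK _ Aa)) // addrAC subrr add0r.
exists (residue x), (x - residue x); split => //; last by rewrite addrC subrK.
by case: (residueP Vx).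
Qed.

Lemma sumset_V A x : incl A K -> sumset A M x -> V x.
Proof. by move=> AK /(sumset_residue _ AK) []. Qed.

Lemma sumset_K A x : incl A K -> sumset A M x -> K x -> A x.
Proof. by move=> AK /(sumset_residue _ AK) [_] + Kx; rewrite residueK. Qed.

Lemma sumset_mem A x : A x -> sumset A M x.
Proof. by move=> Ax; exists x, 0; rewrite addr0; split => //; apply: ideal0 hMi. Qed.

Lemma sumset_M A x : subring A -> M x -> sumset A M x.
Proof. by move=> hA Mx; exists 0, x; rewrite add0r; split => //; apply: subring0 hA. Qed.

Lemma sumset_subring A : subring A -> incl A K -> subring (sumset A M).
Proof.
move=> hA AK; have mem := sumset_residue _ AK.
split.
- exact: sumset_mem (subring0 hA).
- exact: sumset_mem (subring1 hA).
- move=> x y /mem [Vx Ax] /mem [Vy Ay]; apply/mem.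
  by rewrite residueB //; split; [exact: subringB hVs Vx Vy | exact: subringB hA Ax Ay].
- move=> x y /mem [Vx Ax] /mem [Vy Ay]; apply/mem; rewrite residueM //.
  by split; [exact: subringM hVs Vx Vy | exact: subringM hA Ax Ay].
Qed.

Lemma sumset_frac A x : subring A -> fracset (sumset A M) x.
Proof.
move=> hA; have [a [b [Va Vb b0 ->]]] := hVL x; have [m [Mm m0]] := hM0.
exists (a * m), (b * m); split; rewrite ?mulf_neq0 //.
- exact: sumset_M hA (idealMl hMi Va Mm).
- exact: sumset_M hA (idealMl hMi Vb Mm).
- by rewrite invfM mulrACA divff // mulr1.
Qed.

Lemma sumset_unit A x : incl A K -> sumset A M x -> unit_in A (residue x) ->
  unit_in (sumset A M) x.
Proof.
move=> AK /(sumset_residue _ AK) [Vx _] [r0 Ari].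
have nMx : ~ M x by move/(residue_eq0 Vx)/eqP; apply/negP.
have [x0 Vxi] := valuation_nonunits hV hVL hM Vx nMx.
by split => //; apply/(sumset_residue _ AK); rewrite residueV.
Qed.

Lemma sumset_eqK A : eqset A K -> sumset A M = V.
Proof.
move=> AK; apply/funext => x; apply/propext.
have -> : A = K by apply/funext => y; apply/propext.
by split => /hVKM.
Qed.

Lemma sumset_prop_iff A (P : (L -> Prop) -> Prop) : (P (sumset A M) -> eqset A K) ->
  (P (sumset A M) <-> eqset A K /\ P V) /\
  (eqset A K /\ P V <-> eqset (sumset A M) V /\ P (sumset A M)).
Proof.
move=> PeqK; split; split.
- by move=> PR; have e := PeqK PR; rewrite -(sumset_eqK e).
- by case=> e; rewrite (sumset_eqK e).
- by case=> e; rewrite (sumset_eqK e).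
- by case=> _ PR; have e := PeqK PR; rewrite -(sumset_eqK e).
Qed.

Lemma ideal_sumset_M A : subring A -> incl A K -> ideal (sumset A M) M.
Proof.
move=> hA AK; split=> [x Mx||x y Mx My|r x Rr Mx]; first exact: sumset_M hA Mx.
- exact: ideal0 hMi.
- exact: idealD hMi Mx My.
- exact: idealMl hMi (sumset_V AK Rr) Mx.
Qed.


Lemma DVR_sumset_eqK A : subring A -> incl A K -> DVR (sumset A M) -> eqset A K.
Proof.
move=> hA AK [_ _ [_ hP] _]; have [a [Ra haM]] := hP M (ideal_sumset_M hA AK).
have Ma : M a.
  by apply/haM; exists 1; rewrite mulr1; split => //; exact: (sumset_mem (subring1 hA)).
have a0 : a != 0.
  have [m [Mm m0]] := hM0; have [r [_ e]] := (haM m).1 Mm.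
  by apply: contraNneq m0 => a0; rewrite e a0 mul0r.
move=> x; split=> [/AK //|Kx].
have [r [Rr e]] := (haM (x * a)).1 (idealMl hMi (hKV Kx) Ma).
by rewrite (mulIf a0 (etrans e (mulrC a r))) in Kx *; apply: sumset_K Rr Kx.
Qed.

Lemma rational_sumset_eqK A : subring A -> incl A K ->
  rational_valuation_domain (sumset A M) -> eqset A K.
Proof.
move=> hA AK [_ [v [vM vA]]]; have fr := sumset_frac _ hA.
move=> x; split=> [/AK //|Kx]; have [->|x0] := eqVneq x 0; first exact: subring0 hA.
suff Rx : sumset A M x by exact: sumset_K AK Rx Kx.
apply/(vA _ (fr x) x0); have [m [Mm m0]] := hM0.
have vxm n : v (x ^+ n * m) = v m + v x *+ n.
  elim: n => [|n IH]; first by rewrite expr0 mul1r addr0.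
  by rewrite exprS -mulrA vM ?fr ?mulf_neq0 ?expf_neq0 // IH mulrS addrCA.
apply: (@rat_archimedean_ge0 (v m)) => n; rewrite -vxm.
apply/vA; rewrite ?mulf_neq0 ?expf_neq0 //.
exact: (sumset_M hA (idealMl hMi (hKV (subringX n hKs Kx)) Mm)).
Qed.

Lemma intclos_sumset A : subring A -> incl A K ->
  intclos (sumset A M) (fun _ => True) = sumset (intclos A K) M.
Proof.
move=> hA AK; have hR := sumset_subring hA AK.
have DtK : incl (intclos A K) K by move=> x [].
apply/funext => x; apply/propext; rewrite (sumset_residue _ DtK).
split=> [[_ [p [mp Rp px]]]|[Vx [Kr Ir]]]; last first.
  split => //; rewrite -(subrK (residue x) x) addrC.
  have IR : incl A (sumset A M) by move=> y; apply: sumset_mem.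
  exact: (integralD hR (integral_mono IR Ir) (integral_mem hR (sumset_M hA (residueP Vx).2))).
have Vx : V x.
  have RV : incl (sumset A M) V by move=> y; apply: sumset_V.
  by apply: (valuation_integral hV hVL); apply: (integral_mono RV); exists p.
have VP i : V p`_i := sumset_V AK (Rp i).
have r1 : residue 1 = 1 := residueK (subring1 hKs).
have lp : p`_(size p).-1 = 1 by move/monicP: mp; rewrite lead_coefE.
have sp : (0 < size p)%N by rewrite size_poly_gt0 monic_neq0.
pose q := \poly_(i < size p) residue p`_i.
have sq : size q = size p by apply: size_poly_eq; rewrite lp r1 oner_neq0.
split => //; split; first exact: (residueP Vx).1.
exists q; split.
- by rewrite monicE lead_coefE sq coef_poly ltn_predL sp lp r1.
- move=> i; rewrite coef_poly; case: ifP => _; last exact: subring0 hA.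
  exact: ((sumset_residue _ AK).1 (Rp i)).2.
- rewrite /root; have -> : q.[residue x] = residue p.[x].
    rewrite horner_coef sq horner_coef residue_sum => [|i]; last first.
      exact: subringM hVs (VP i) (subringX _ hVs Vx).
    by apply: eq_bigr => i _; rewrite coef_poly ltn_ord residueM ?residueX //; apply: subringX.
  by move/eqP: px ->; rewrite residueK //; apply: subring0 hKs.
Qed.

Lemma sumset_exp A b m n : incl A K -> K b -> M m ->
  sumset A M ((b + m) ^+ n) <-> A (b ^+ n).
Proof.
move=> AK Kb Mm; have Vbm := subringD hVs (hKV Kb) (ideal_sub hMi Mm).
have rbm : residue (b + m) = b by apply: residue_eq Kb _; rewrite addrAC subrr add0r.
rewrite sumset_residue // residueX // rbm; split=> [[]//|Abn].
by split => //; apply: subringX hVs Vbm.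
Qed.

Lemma root_ext_sumset A B : incl A K -> incl B K ->
  root_ext (sumset A M) (sumset B M) <-> root_ext A B.
Proof.
move=> AK BK; split=> [hroot b Bb|hroot _ [b [m [Bb Mm ->]]]].
  have [n [n0 Rbn]] := hroot b (sumset_mem Bb); exists n; split => //.
  exact: sumset_K AK Rbn (subringX n hKs (BK _ Bb)).
have [n [n0 Abn]] := hroot b Bb; exists n; split => //.
exact/(sumset_exp n AK (BK _ Bb) Mm).
Qed.

Lemma bounded_root_ext_sumset A B : incl A K -> incl B K ->
  bounded_root_ext (sumset A M) (sumset B M) <-> bounded_root_ext A B.
Proof.
move=> AK BK; split=> [[n [n0 hroot]]|[n [n0 hroot]]]; exists n; split => //.
  move=> b Bb; have Rbn := hroot b (sumset_mem Bb).
  exact: sumset_K AK Rbn (subringX n hKs (BK _ Bb)).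
move=> _ [b [m [Bb Mm ->]]]; exact/(sumset_exp n AK (BK _ Bb) Mm)/hroot.
Qed.

Lemma AV_sumset A : subring A -> incl A K ->
  AV_domain (sumset A M) <-> root_valuation A K.
Proof.
move=> hA AK; rewrite AV_domainE; last exact: sumset_subring.
split=> [hrv x Kx x0|hrv w _ w0].
  have [n [n0 hn]] := hrv x (sumset_frac x hA) x0; exists n; split => //.
  case: hn => Rn; [left | right]; apply: sumset_K AK Rn _.
    exact: subringX n hKs Kx.
  exact: subringX n hKs (Kinv Kx x0).
wlog Vw : w w0 / V w.
  move=> hw; have [Vw|Vwi] := valuation_dichotomy hV hVL w0; first exact: hw.
  have [n [n0 hn]] := hw w^-1 (invr_neq0 w0) Vwi; exists n; split => //.
  by rewrite invrK in hn; case: hn; [right | left].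
have [Mw|nMw] := pselect (M w).
  by exists 1%N; rewrite expr1; split => //; left; apply: sumset_M hA Mw.
have r0 : residue w != 0 by apply/eqP => /(residue_eq0 Vw).
have [_ Vwi] := valuation_nonunits hV hVL hM Vw nMw.
have [n [n0 hn]] := hrv _ (residueP Vw).1 r0; exists n; split => //.
case: hn => An; [left | right]; apply/(sumset_residue _ AK); rewrite residueX ?residueV //.
  by split => //; apply: subringX hVs Vw.
by split => //; apply: subringX hVs Vwi.
Qed.

Lemma sumset_ideal A N : subring A -> incl A K -> ideal A N ->
  ideal (sumset A M) (sumset N M).
Proof.
move=> hA AK hN; have NK : incl N K by move=> x /(ideal_sub hN) /AK.
have memN := sumset_residue _ NK; have memA := sumset_residue _ AK.
split.
- by move=> x /memN [Vx Nr]; apply/memA; split => //; apply: (ideal_sub hN).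
- exact: sumset_mem (ideal0 hN).
- move=> x y /memN [Vx Nx] /memN [Vy Ny]; apply/memN; rewrite residueD //.
  by split; [exact: subringD hVs Vx Vy | exact: idealD hN Nx Ny].
- move=> r x /memA [Vr Ar] /memN [Vx Nx]; apply/memN; rewrite residueM //.
  by split; [exact: subringM hVs Vr Vx | exact: idealMl hN Ar Nx].
Qed.

Section SubringD.
Variable D : L -> Prop.
Hypotheses (hD : subring D) (hDK : incl D K).
Local Notation R := (sumset D M).
Local Notation F := (fracset D).

Let hR : subring R. Proof. exact: sumset_subring. Qed.
Let hMR : ideal R M. Proof. exact: ideal_sumset_M. Qed.
Let RV : incl R V. Proof. by move=> x; apply: sumset_V. Qed.

Lemma sumset_field_nonunits : is_field D -> contains_nonunits R M.
Proof.
case=> _ Dinv x Rx nMx; have [Vx Dr] := (sumset_residue _ hDK).1 Rx.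
have r0 : residue x != 0 by apply/eqP => /(residue_eq0 Vx).
exact: sumset_unit hDK Rx (conj r0 (Dinv _ Dr r0)).
Qed.

Lemma sumset_field_maximal : is_field D -> maximal_ideal R M.
Proof.
move=> hDf; apply: maximal_of_nonunits hMR _ (sumset_field_nonunits hDf).
by case: hM.
Qed.

Lemma sumset_field_maximal_eq Q : is_field D -> maximal_ideal R Q -> Q = M.
Proof.
move=> hDf hQ; apply/funext => x; apply/propext.
exact: maximal_nonunits_unique (sumset_field_maximal hDf) (sumset_field_nonunits hDf) hQ x.
Qed.

Lemma intclos_field_eqK : is_field D -> root_ext F K -> intclos D K = K.
Proof.
move=> hDf hroot; have eDF := (field_fracE hD).1 hDf.
apply/funext => x; apply/propext; split=> [[]//|Kx]; split => //.
by have [n [n0 Fxn]] := hroot x Kx; apply: integral_root hD n0 _; apply/eDF.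
Qed.

Lemma root_valuation_field : is_field D -> root_ext F K -> root_valuation D K.
Proof.
move=> hDf hroot; apply/(root_valuation_frac hD hK hDK); split => //.
exact: field_AV_domain.
Qed.

Lemma sumset_idpow_cap0 : is_field D -> DVR V -> forall Q, maximal_ideal R Q ->
  forall x, (forall n, (0 < n)%N -> idpow R Q n x) -> x = 0.
Proof.
move=> hDf hDVR Q hQ; rewrite (sumset_field_maximal_eq hDf hQ) => x hx.
have [t tu] := dvr_uniformizer hV hVL hM hDVR; have [_ _ hcap] := tu.
apply: hcap => n; have [v [Vv ->]] := idpow_dvdr hV RV (fun y My => My) tu (hx _ (ltn0Sn n)).
exists (t * v); split; last by rewrite exprSr -mulrA.
exact (subringM hVs (ideal_sub hMi (uniformizer_mem hV tu)) Vv).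
Qed.

Lemma sumset_idpow_cofinal : is_field D -> DVR V -> forall Q, maximal_ideal R Q ->
  forall I, ideal R I -> (exists a, I a /\ a != 0) -> exists n, incl (idpow R Q n) I.
Proof.
move=> hDf hDVR Q hQ I hI [a [Ia a0]]; rewrite (sumset_field_maximal_eq hDf hQ).
have [t tu] := dvr_uniformizer hV hVL hM hDVR; have Mt := uniformizer_mem hV tu.
have [k [u [Vu [u0 Vui] ea]]] := uniformizer_factor hV hVL hM tu (RV (ideal_sub hI Ia)) a0.
exists k.+1 => y /(idpow_dvdr hV RV (fun y My => My) tu) [v [Vv ->]].
have -> : t ^+ k.+1 * v = (u^-1 * (t * v)) * a by rewrite ea exprSr; field.
exact: idealMl hI (sumset_M hD (idealMl hMi Vui (idealMr hMi Vv Mt))) Ia.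
Qed.

(* A nonzero nonunit d of the local ring D would put every m = d^n (d^-n m) of M
   in all powers of the maximal ideal (nonunits of D) + M. *)
Lemma sumset_field_of_cap0 : root_valuation D K ->
  (forall Q, maximal_ideal R Q -> forall x, (forall n, (0 < n)%N -> idpow R Q n x) -> x = 0) ->
  is_field D.
Proof.
move=> hrv hcap; split => // d Dd d0; have [//|nDdi] := pselect (D d^-1); exfalso.
pose Dn y := D y /\ ~ unit_in D y.
have DnK : incl Dn K by move=> y [/hDK].
have hDn : ideal D Dn.
  apply: nonunits_ideal hD _ => x y Dx Dy.
  exact: root_valuation_nonunitD hD hK hDK hrv Dx Dy.
have hQ0 : maximal_ideal R (sumset Dn M).
  apply: maximal_of_nonunits; first exact: sumset_ideal.
    move=> /(sumset_residue _ DnK) [_ [_]]; apply.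
    rewrite residueK; last exact: subring1 hKs.
    by split; [exact: oner_neq0 | rewrite invr1; apply: subring1 hD].
  move=> x Rx nQx; have [Vx Dr] := (sumset_residue _ hDK).1 Rx.
  apply: (sumset_unit hDK Rx); apply: contra_notP nQx => nu.
  exact/(sumset_residue _ DnK).
have [m [Mm /eqP m0]] := hM0; apply: m0; apply: (hcap _ hQ0) => n _.
have Rdm : R (d^-1 ^+ n * m).
  exact: sumset_M hD (idealMl hMi (hKV (subringX n hKs (Kinv (hDK Dd) d0))) Mm).
have -> : m = d ^+ n * (d^-1 ^+ n * m) by rewrite mulrA -exprMn mulfV // expr1n mul1r.
by apply: idpow_mul Rdm; apply: sumset_mem; split => // [[]].
Qed.

Lemma sumset_DVR_of_cap0 : is_field D ->
  (forall x, (forall n, (0 < n)%N -> idpow R M n x) -> x = 0) -> DVR V.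
Proof.
move=> hDf hcap.
have M1 x : M x -> idpow R M 1 x.
  by move=> Mx; rewrite /= -[x]mul1r; apply: idmul_mul (subring1 hR) Mx.
have [t [Mt nt]] : exists t, M t /\ ~ idpow R M 2 t.
  have [//|/forallNP M2] := pselect (exists t, M t /\ ~ idpow R M 2 t).
  have MMn n x : M x -> idpow R M n.+1 x.
    elim: n x => [|n IH] x Mx; first exact: M1.
    have : idpow R M 2 x by apply: contra_notP (M2 x) => nx.
    by apply: idmul_mono => y Iy; apply: IH; apply: (idmul_ideal hMR).
  have [m [Mm /eqP m0]] := hM0; case: m0; apply: hcap => -[|n] // _; exact: MMn.
have t0 : t != 0.
  apply/eqP => t0; apply: nt; rewrite t0 -(mulr0 0).
  exact: idmul_mul (M1 _ (ideal0 hMi)) (ideal0 hMi).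
apply: (uniformizer_dvr hV hVL hM (t := t)); split => // [x|x xt].
  split=> [Mx|[c [Vc ->]]]; last exact: idealMr hMi Vc Mt.
  have [->|x0] := eqVneq x 0.
    by exists 0; rewrite mulr0; split => //; apply: subring0 hVs.
  suff Vxt : V (x / t) by exists (x / t); split => //; rewrite mulrC divfK.
  have [//|] := valuation_dichotomy hV hVL (mulf_neq0 x0 (invr_neq0 t0)).
  rewrite invf_div => Vtx; have [Mtx|nMtx] := pselect (M (t / x)).
    by case: nt; rewrite -(divfK x0 t) mulrC; apply: idmul_mul (M1 _ Mx) Mtx.
  by have [_] := valuation_nonunits hV hVL hM Vtx nMtx; rewrite invf_div.
apply: hcap => -[|n] // _; have [v [Vv ->]] := xt n.+1.
exact (exp_idpow hM n hR Mt Vv).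
Qed.

Lemma AV_DVR_closure_sumsetE :
  AV_domain R /\ DVR (intclos R (fun _ => True)) <-> [/\ DVR V, eqset D F & root_ext F K].
Proof.
have hDt := intclos_subring hD hKs; have DtK : incl (intclos D K) K by move=> x [].
rewrite intclos_sumset // AV_sumset //; split=> [[hrv hDVR]|[hDVR eDF hroot]].
  have eDt := DVR_sumset_eqK hDt DtK hDVR.
  have hDf : is_field D.
    split => // d Dd d0; apply: (integral_inv_mem hD Dd d0).
    exact: (proj2 (eDt _) (Kinv (hDK Dd) d0)).2.
  split; first by rewrite -(sumset_eqK eDt).
    exact/field_fracE.
  exact: ((root_valuation_frac hD hK hDK).1 hrv).2.
have hDf := (field_fracE hD).2 eDF.
split; first exact: root_valuation_field.
by rewrite intclos_field_eqK // sumset_eqK.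
Qed.

Lemma AV_idpow_cap0_sumsetE :
  (AV_domain R /\ forall Q, maximal_ideal R Q ->
     forall x, (forall n, (0 < n)%N -> idpow R Q n x) -> x = 0) <->
  [/\ DVR V, eqset D F & root_ext F K].
Proof.
rewrite AV_sumset //; split=> [[hrv hcap]|[hDVR eDF hroot]].
  have hDf := sumset_field_of_cap0 hrv hcap.
  split; last exact: ((root_valuation_frac hD hK hDK).1 hrv).2.
    exact: sumset_DVR_of_cap0 hDf (hcap M (sumset_field_maximal hDf)).
  exact/field_fracE.
have hDf := (field_fracE hD).2 eDF.
by split; [exact: root_valuation_field | exact: sumset_idpow_cap0].
Qed.

Lemma AV_idpow_cofinal_sumsetE :
  (AV_domain R /\ forall Q, maximal_ideal R Q ->
     forall I, ideal R I -> (exists a, I a /\ a != 0) -> (exists r, R r /\ ~ I r) ->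
     exists n, incl (idpow R Q n) I) <->
  [/\ DVR V, eqset D F & root_ext F K].
Proof.
rewrite -AV_idpow_cap0_sumsetE; split=> [[hAV hcof]|[hAV hcap]]; split => // Q hQ.
  exact: idpow_cap0 hR hQ (hcof Q hQ).
have [hDVR eDF _] := AV_idpow_cap0_sumsetE.1 (conj hAV hcap).
move=> I hI hI0 _; exact: sumset_idpow_cofinal ((field_fracE hD).2 eDF) hDVR Q hQ I hI hI0.
Qed.

End SubringD.
End KplusM.

Theorem theorem13 (L : fieldType) (V M K D : L -> Prop)
  (* (V, M) valuation domain with quotient field L *)
  (hV : valuation_domain V) (hVL : forall x, fracset V x)
  (hM : maximal_ideal V M) (hM0 : exists m, M m /\ m != 0)
  (* K subfield of V with V = K + M *)
  (hK : is_field K) (hKV : incl K V) (hVKM : eqset V (sumset K M))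
  (* D subring of K *)
  (hD : subring D) (hDK : incl D K) :
  let F := fracset D in
  let Dt := intclos D K in
  let R := sumset D M in
  let Rb := intclos R (fun _ => True) in
  (* (6) *)
  ((DVR R <-> eqset D K /\ DVR V) /\
   (eqset D K /\ DVR V <-> eqset R V /\ DVR R)) /\
  ((rational_valuation_domain R <-> eqset D K /\ rational_valuation_domain V) /\
   (eqset D K /\ rational_valuation_domain V <->
      eqset R V /\ rational_valuation_domain R)) /\
  (* (7) *)
  (root_ext R Rb <-> root_ext D Dt) /\
  (bounded_root_ext R Rb <-> bounded_root_ext D Dt) /\
  (* (8) *)
  ((AV_domain R <-> [/\ valuation_domain Dt, eqset (fracset Dt) K & root_ext D Dt]) /\
   ([/\ valuation_domain Dt, eqset (fracset Dt) K & root_ext D Dt] <->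
      AV_domain D /\ root_ext F K)) /\
  (* (9) *)
  (let c1 := AV_domain R /\ DVR Rb in
   let c2 := AV_domain R /\ forall Q, maximal_ideal R Q ->
               forall x, (forall n, (0 < n)%N -> idpow R Q n x) -> x = 0 in
   let c3 := AV_domain R /\ forall Q, maximal_ideal R Q ->
               forall A, ideal R A -> (exists a, A a /\ a != 0) ->
               (exists r, R r /\ ~ A r) ->
               exists n, incl (idpow R Q n) A in
   let c4 := [/\ DVR V, eqset D F & root_ext F K] in
   (c1 <-> c2) /\ (c2 <-> c3) /\ (c3 <-> c4)).
Proof.
move=> F Dt R Rb; rewrite {}/Rb {}/R {}/Dt {}/F.
have hKs : subring K by case: hK.
have DtK : incl (intclos D K) K by move=> x [].
split; first exact: (sumset_prop_iff hVKM (DVR_sumset_eqK hV hM hM0 hK hKV hVKM hD hDK)).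
split.
  exact: (sumset_prop_iff hVKM (rational_sumset_eqK hV hVL hM hM0 hK hKV hVKM hD hDK)).
have RbE := intclos_sumset hV hVL hM hK hKV hVKM hD hDK.
split; first by rewrite RbE; apply: (root_ext_sumset hV hM hK hKV hVKM hDK DtK).
split; first by rewrite RbE; apply: (bounded_root_ext_sumset hV hM hK hKV hVKM hDK DtK).
split.
  have := AV_sumset hV hVL hM hM0 hK hKV hVKM hD hDK.
  have := root_valuation_intclos hD hK hDK; have := root_valuation_frac hD hK hDK.
  tauto.
have := AV_DVR_closure_sumsetE hV hVL hM hM0 hK hKV hVKM hD hDK.
have := AV_idpow_cap0_sumsetE hV hVL hM hM0 hK hKV hVKM hD hDK.
have := AV_idpow_cofinal_sumsetE hV hVL hM hM0 hK hKV hVKM hD hDK.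
tauto.
Qed.
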